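(* Let $G_0$ be a connected graph with two distinct vertices $x,y$ such that $d_{G_0}(x)\in\{2,3\}$ and $d_{G_0}(y)\in\{2,3\}$. Let $P_1=u_1u_2\cdots u_k$ ($k\ge1$) and $P_2=v_1v_2\cdots v_l$ ($l\ge1$) be paths, vertex-disjoint from each other and from $G_0$. Let $G_1$ be the graph obtained from the disjoint union of $G_0,P_1,P_2$ by adding the edges $u_1x$ and $v_1y$, and let $G_2=G_1-u_1x+u_1v_l$. Then $SO(G_1)>SO(G_2)$ and $SO_{red}(G_1)>SO_{red}(G_2)$.
   Context: $d_G(u)$ denotes the degree of $u$ in $G$. $SO(G)=\sum_{uv\in E(G)}\sqrt{d_G(u)^2+d_G(v)^2}$ and $SO_{red}(G)=\sum_{uv\in E(G)}\sqrt{(d_G(u)-1)^2+(d_G(v)-1)^2}$. *)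

From HB Require Import structures.
From mathcomp Require Import all_boot all_order all_algebra.
From mathcomp Require Import reals.
Set Implicit Arguments. Unset Strict Implicit. Unset Printing Implicit Defensive.
Import Order.TTheory GRing.Theory Num.Theory.
Local Open Scope ring_scope.

Definition simple_graph (V : finType) (e : rel V) : Prop :=
  symmetric e /\ irreflexive e.

Definition connected_graph (V : finType) (e : rel V) : Prop :=
  forall a b : V, connect e a b.

Definition deg (V : finType) (e : rel V) (u : V) : nat := #|[set w | e u w]|.

(* SO(G) = sum over edges uv of sqrt(d(u)^2 + d(v)^2); each unordered edge
   is counted twice in the sum over ordered adjacent pairs, hence the 1/2. *)
Definition SO (R : realType) (V : finType) (e : rel V) : R :=
  2^-1 * \sum_(u : V) \sum_(v : V | e u v)
           Num.sqrt ((deg e u)%:R ^+ 2 + (deg e v)%:R ^+ 2).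

Definition SOred (R : realType) (V : finType) (e : rel V) : R :=
  2^-1 * \sum_(u : V) \sum_(v : V | e u v)
           Num.sqrt (((deg e u)%:R - 1) ^+ 2 + ((deg e v)%:R - 1) ^+ 2).

(* Vertex set of the disjoint union G0 + P1 + P2:
   inl t = vertex t of G0, inr (inl i) = u_(i+1), inr (inr j) = v_(j+1). *)
Definition VU (T : finType) (k l : nat) : finType := (T + ('I_k + 'I_l))%type.

Definition path_adj (n : nat) (i j : 'I_n) : bool :=
  (i.+1 == j :> nat) || (j.+1 == i :> nat).

Definition G1adj (T : finType) (g : rel T) (x y : T) (k l : nat)
  : rel (VU T k l) := fun a b =>
  match a, b with
  | inl a', inl b' => g a' b'
  | inr (inl i), inr (inl j) => path_adj i j
  | inr (inr i), inr (inr j) => path_adj i j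
  | inl a', inr (inl i) => (a' == x) && (val i == 0)%N
  | inr (inl i), inl a' => (a' == x) && (val i == 0)%N
  | inl a', inr (inr i) => (a' == y) && (val i == 0)%N
  | inr (inr i), inl a' => (a' == y) && (val i == 0)%N
  | _, _ => false
  end.

Definition is_u1 (T : finType) (k l : nat) (a : VU T k l) : bool :=
  if a is inr (inl i) then (val i == 0)%N else false.
Definition is_vl (T : finType) (k l : nat) (a : VU T k l) : bool :=
  if a is inr (inr j) then (val j == l.-1)%N else false.
Definition is_vx (T : finType) (x : T) (k l : nat) (a : VU T k l) : bool :=
  a == inl x.

Definition G2adj (T : finType) (g : rel T) (x y : T) (k l : nat)
  : rel (VU T k l) := fun a b =>
  (G1adj g x y a b && ~~ ((is_u1 a && is_vx x b) || (is_vx x a && is_u1 b)))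
  || (is_u1 a && is_vl b) || (is_vl a && is_u1 b).

Arguments G1adj {T} g x y k l.
Arguments G2adj {T} g x y k l.

From HB Require Import structures.
From mathcomp Require Import all_boot all_order all_algebra.
From mathcomp Require Import reals.
From mathcomp Require Import ring lra zify.
Set Implicit Arguments. Unset Strict Implicit. Unset Printing Implicit Defensive.
Import Order.TTheory GRing.Theory Num.Theory.
Local Open Scope ring_scope.

(* Passing from G1 to G2 turns the edge u1 x about u1 onto the pendant vertex
   v_l: the degree of x drops by one, that of v_l rises from 1 to 2, and all
   other degrees are unchanged.  Both indices sum over the edges ab a weight
   F(d(a), d(b)) = sqrt((d(a) - c)^2 + (d(b) - c)^2), with c = 0 or c = 1,
   which is nondecreasing in each degree.  Hence only three edges can weigh
   more in G2 than in G1: u1 x is replaced by u1 v_l and v_l w, w the neighbour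
   of v_l, gets heavier.  With d(x) >= 3, d(u1) <= 2 and d(w) >= 2 one checks
   numerically that F(d(x), d(u1)) + F(1, d(w)) > F(d(u1), 2) + F(2, d(w)). *)

Definition weight_sum (R : nmodType) (V : finType) (F : nat -> nat -> R)
    (e : rel V) : R :=
  \sum_(a : V) \sum_(b : V | e a b) F (deg e a) (deg e b).

Definition edge_weight (R : nmodType) (V : finType) (F : nat -> nat -> R)
    (e : rel V) (p : V * V) : R :=
  if e p.1 p.2 then F (deg e p.1) (deg e p.2) else 0.

Lemma weight_sum_pairs (R : nmodType) (V : finType) (F : nat -> nat -> R)
    (e : rel V) :
  weight_sum F e = \sum_(p : V * V) edge_weight F e p.
Proof.
rewrite -(pair_bigA _ (fun a b => if e a b then F (deg e a) (deg e b) else 0)).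
by apply: eq_bigr => a _; rewrite big_mkcond.
Qed.

Lemma eq_deg (V : finType) (e e' : rel V) : e =2 e' -> deg e =1 deg e'.
Proof. by move=> ee' a; apply: eq_card => b; rewrite !inE ee'. Qed.

Lemma eq_weight_sum (R : nmodType) (V : finType) (F : nat -> nat -> R)
    (e e' : rel V) :
  e =2 e' -> weight_sum F e = weight_sum F e'.
Proof.
move=> ee'; apply: eq_bigr => a _; rewrite (eq_bigl (e' a)) => [|b]; last exact: ee'.
by apply: eq_bigr => b _; rewrite !(eq_deg ee').
Qed.

Lemma deg_gt0 (V : finType) (e : rel V) a b : e a b -> (0 < deg e a)%N.
Proof. by move=> eab; apply/card_gt0P; exists b; rewrite inE. Qed.

Lemma deg_pendant (V : finType) (e : rel V) v w :
  (forall b, e v b = (b == w)) -> deg e v = 1%N.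
Proof.
move=> v_pendant; rewrite /deg -(cards1 w); apply: eq_card => b.
by rewrite !inE v_pendant.
Qed.

Lemma two_le_deg (V : finType) (e : rel V) a b c :
  e a b -> e a c -> b != c -> (1 < deg e a)%N.
Proof.
move=> eab eac b_neq_c; have <- : #|[set b; c]| = 2%N by rewrite cards2 b_neq_c.
by apply/subset_leq_card/subsetP => z; rewrite !inE => /orP[]/eqP->.
Qed.

Definition rotation_weight (R : realDomainType) (F : nat -> nat -> R) :=
  [/\ commutative F,
      forall m m' n n', (0 < m <= m')%N -> (0 < n <= n')%N -> F m n <= F m' n' &
      forall a du dw, (2 < a)%N -> (0 < du <= 2)%N -> (1 < dw)%N ->
        F du 2%N + F 2%N dw < F a du + F 1%N dw].

Section Rotation.
Variables (V : finType) (e : rel V) (u x v : V).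

Definition rotate : rel V := fun a b =>
  (e a b && ~~ ((a == u) && (b == x) || (a == x) && (b == u)))
  || ((a == u) && (b == v)) || ((a == v) && (b == u)).

Definition rotated_pairs : seq (V * V) := [:: (x, u); (u, x); (u, v); (v, u)].

Lemma rotate_notin a b : (a, b) \notin rotated_pairs -> rotate a b = e a b.
Proof.
rewrite /rotate !inE !xpair_eqE !negb_or.
by move=> /and4P[/negbTE-> /negbTE-> /negbTE-> /negbTE->]; rewrite /= andbT !orbF.
Qed.

Hypotheses (e_sym : symmetric e) (e_irr : irreflexive e).
Hypotheses (e_ux : e u x) (e_uv : ~~ e u v) (u_neq_v : u != v).

Let x_neq_u : x != u.
Proof. by apply: contraTneq e_ux => ->; rewrite e_irr. Qed.

Let x_neq_v : x != v.
Proof. by apply: contraNneq e_uv => <-. Qed.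

Lemma rotate_sym : symmetric rotate.
Proof.
move=> a b; rewrite /rotate e_sym.
by case: (a == u); case: (a == x); case: (a == v); case: (b == u);
  case: (b == x); case: (b == v); rewrite /= ?orbF ?orbT ?andbF ?andbT.
Qed.

Lemma deg_rotate_x : deg e x = (deg rotate x).+1.
Proof.
rewrite /deg (cardsD1 u) inE e_sym e_ux add1n; congr _.+1.
apply: eq_card => b; rewrite !inE /rotate (negbTE x_neq_u) (negbTE x_neq_v).
by rewrite eqxx /= !orbF andbC.
Qed.

Lemma deg_rotate_u : deg rotate u = deg e u.
Proof.
rewrite /deg; have -> : [set b | rotate u b] = v |: ([set b | e u b] :\ x).
  apply/setP => b; rewrite !inE /rotate (eq_sym u x) (negbTE x_neq_u) (negbTE u_neq_v).
  by rewrite eqxx /= !orbF orbC andbC.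
rewrite cardsU1 !inE (negbTE e_uv) andbF add1n.
by rewrite [in RHS](cardsD1 x) inE e_ux.
Qed.

Lemma deg_rotate_v : deg rotate v = (deg e v).+1.
Proof.
rewrite /deg; have -> : [set b | rotate v b] = u |: [set b | e v b].
  apply/setP => b; rewrite !inE /rotate (eq_sym v u) (negbTE u_neq_v) (eq_sym v x) (negbTE x_neq_v).
  by rewrite eqxx /= andbT orbF orbC.
by rewrite cardsU1 inE e_sym (negbTE e_uv).
Qed.

Lemma deg_rotate_other z : z != u -> z != x -> z != v -> deg rotate z = deg e z.
Proof.
move=> z_neq_u z_neq_x z_neq_v; apply: eq_card => b.
by rewrite !inE /rotate (negbTE z_neq_u) (negbTE z_neq_x) (negbTE z_neq_v) /= andbT !orbF.
Qed.

Lemma deg_rotate_le z : z != v -> (deg rotate z <= deg e z)%N.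
Proof.
move=> z_neq_v; have [->|z_neq_x] := eqVneq z x; first by rewrite deg_rotate_x.
have [->|z_neq_u] := eqVneq z u; first by rewrite deg_rotate_u.
by rewrite deg_rotate_other.
Qed.

Section RotationWeight.
Variables (R : realDomainType) (F : nat -> nat -> R) (w : V).
Hypothesis F_rot : rotation_weight F.
Hypotheses (v_pendant : forall b, e v b = (b == w)) (w_neq_x : w != x).
Hypotheses (deg_x : (2 < deg e x)%N) (deg_u : (deg e u <= 2)%N) (deg_w : (1 < deg e w)%N).

Let e_vw : e v w. Proof. by rewrite v_pendant. Qed.

Definition weight_changing_pairs := rotated_pairs ++ [:: (v, w); (w, v)].

Lemma edge_weight_rotate_le p : p \notin weight_changing_pairs ->
  edge_weight F rotate p <= edge_weight F e p.
Proof.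
case: p => a b; rewrite mem_cat negb_or => /andP[/rotate_notin rot_ab vw_notin].
have [_ F_mono _] := F_rot; rewrite /edge_weight /= rot_ab.
case: ifP => // e_ab.
have a_neq_v : a != v.
  apply: contraNneq vw_notin => a_v; move: e_ab; rewrite a_v v_pendant.
  by move=> /eqP->; rewrite inE eqxx.
have b_neq_v : b != v.
  apply: contraNneq vw_notin => b_v; move: e_ab; rewrite b_v e_sym v_pendant.
  by move=> /eqP->; rewrite !inE eqxx orbT.
apply: F_mono; rewrite !deg_rotate_le // !andbT.
  by apply: (deg_gt0 (b := b)); rewrite rot_ab.
by apply: (deg_gt0 (b := a)); rewrite rotate_sym rot_ab.
Qed.

Lemma weight_sum_rotate_lt : weight_sum F rotate < weight_sum F e.
Proof.
have [F_sym _ F_gain] := F_rot.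
have w_neq_v : w != v by apply: contraTneq e_vw => ->; rewrite e_irr.
have w_neq_u : w != u by apply: contraNneq e_uv => <-; rewrite e_sym.
have ne := (negbTE x_neq_u, negbTE x_neq_v, negbTE u_neq_v,
            negbTE w_neq_x, negbTE w_neq_u, negbTE w_neq_v).
have ne' := (eq_sym u x, eq_sym v x, eq_sym v u, eq_sym x w, eq_sym u w, eq_sym v w).
have uniq_pairs : uniq weight_changing_pairs.
  by rewrite /= !inE !xpair_eqE !ne' !ne !eqxx /= ?andbF.
rewrite !weight_sum_pairs (bigID (mem weight_changing_pairs)).
rewrite [X in _ < X](bigID (mem weight_changing_pairs)) /= -!big_uniq //.
apply: ltr_leD; last by apply: ler_sum => p; apply: edge_weight_rotate_le.
rewrite !big_cons !big_nil /edge_weight /= deg_rotate_u deg_rotate_v.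
rewrite (deg_rotate_other w_neq_u w_neq_x w_neq_v) (deg_pendant v_pendant).
rewrite /rotate !eqxx !ne' !ne (e_sym w v) (e_sym x u) (e_sym v u) e_vw e_ux.
rewrite (negbTE e_uv) /= (F_sym 2%N (deg e u)) (F_sym (deg e w) 2%N).
rewrite (F_sym (deg e u) (deg e x)) (F_sym (deg e w) 1%N).
have deg_u12 : (0 < deg e u <= 2)%N by rewrite deg_u (deg_gt0 e_ux).
by have := F_gain _ _ _ deg_x deg_u12 deg_w; lra.
Qed.

End RotationWeight.

End Rotation.

Section SqrtWeight.
Variable R : rcfType.

Lemma sqrtr_ge_sqr (a c : R) : 0 <= a -> a ^+ 2 <= c -> a <= Num.sqrt c.
Proof.
move=> a_ge0 a2_le_c; rewrite -(ger0_norm a_ge0) -sqrtr_sqr ler_sqrt //.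
exact: le_trans (sqr_ge0 a) a2_le_c.
Qed.

Lemma sqrtr_le_sqr (a c : R) : 0 <= a -> c <= a ^+ 2 -> Num.sqrt c <= a.
Proof. by move=> a_ge0 c_le_a2; rewrite -(ger0_norm a_ge0) -sqrtr_sqr ler_wsqrtr. Qed.

Definition sqrt_weight (c : R) (m n : nat) : R :=
  Num.sqrt ((m%:R - c) ^+ 2 + (n%:R - c) ^+ 2).

Arguments sqrt_weight c m%_N n%_N.

Lemma sqrt_weight_sym c : commutative (sqrt_weight c).
Proof. by move=> m n; rewrite /sqrt_weight addrC. Qed.

Lemma sqrt_weight_mono c m m' n n' : 0 <= c <= 1 ->
  (0 < m <= m')%N -> (0 < n <= n')%N -> sqrt_weight c m n <= sqrt_weight c m' n'.
Proof.
move=> /andP[c_ge0 c_le1] /andP[m_gt0 le_mm'] /andP[n_gt0 le_nn'].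
apply: ler_wsqrtr.
have : 1 <= m%:R :> R by rewrite ler1n.
have : 1 <= n%:R :> R by rewrite ler1n.
have : m%:R <= m'%:R :> R by rewrite ler_nat.
have : n%:R <= n'%:R :> R by rewrite ler_nat.
nra.
Qed.

Lemma sqrt_weight_rotation c d : 0 <= c <= 1 ->
    (forall n, (1 < n)%N -> sqrt_weight c 2 n - sqrt_weight c 1 n <= d) ->
    sqrt_weight c 1 2 + d < sqrt_weight c 3 1 ->
    sqrt_weight c 2 2 + d < sqrt_weight c 3 2 ->
  rotation_weight (sqrt_weight c).
Proof.
move=> c01 step gain1 gain2; split=> [|m m' n n'|a du dw a_gt2 du12 dw_gt1].
- exact: sqrt_weight_sym.
- exact: sqrt_weight_mono c01.
- have le_a : sqrt_weight c 3 du <= sqrt_weight c a du.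
    by apply: sqrt_weight_mono => //; lia.
  move: le_a (step _ dw_gt1).
  have du_12 : du = 1%N \/ du = 2%N by lia.
  by case: du_12 => ->; lra.
Qed.

Lemma sqrt_weight0_rotation : rotation_weight (sqrt_weight 0).
Proof.
apply: (@sqrt_weight_rotation _ (3 / 5)).
- by rewrite lexx ler01.
- move=> n n_gt1; rewrite /sqrt_weight !subr0.
  have : 2 <= n%:R :> R by rewrite ler_nat.
  set D := n%:R; set s := Num.sqrt _; set t := Num.sqrt _ => D_ge2.
  have s_ge : 14 / 5 <= s by apply: sqrtr_ge_sqr; nra.
  have t_ge : 11 / 5 <= t by apply: sqrtr_ge_sqr; nra.
  have : s ^+ 2 - t ^+ 2 = 3 by rewrite !sqr_sqrtr ?addr_ge0 ?sqr_ge0 //; ring.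
  nra.
- have : sqrt_weight 0 1 2 <= 9 / 4 by apply: sqrtr_le_sqr; rewrite ?subr0; lra.
  have : 31 / 10 <= sqrt_weight 0 3 1 by apply: sqrtr_ge_sqr; rewrite ?subr0; lra.
  lra.
- have : sqrt_weight 0 2 2 <= 283 / 100 by apply: sqrtr_le_sqr; rewrite ?subr0; lra.
  have : 18 / 5 <= sqrt_weight 0 3 2 by apply: sqrtr_ge_sqr; rewrite ?subr0; lra.
  lra.
Qed.

Lemma sqrt_weight1_rotation : rotation_weight (sqrt_weight 1).
Proof.
apply: (@sqrt_weight_rotation _ (1 / 2)).
- by rewrite ler01 lexx.
- move=> n n_gt1; rewrite /sqrt_weight.
  have : 2 <= n%:R :> R by rewrite ler_nat.
  set D := n%:R; set s := Num.sqrt _; set t := Num.sqrt _ => D_ge2.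
  have s_ge : 1 <= s by apply: sqrtr_ge_sqr; nra.
  have t_ge : 1 <= t by apply: sqrtr_ge_sqr; nra.
  have : s ^+ 2 - t ^+ 2 = 1 by rewrite !sqr_sqrtr ?addr_ge0 ?sqr_ge0 //; ring.
  nra.
- have : sqrt_weight 1 1 2 <= 1 by apply: sqrtr_le_sqr; lra.
  have : 2 <= sqrt_weight 1 3 1 by apply: sqrtr_ge_sqr; lra.
  lra.
- have : sqrt_weight 1 2 2 <= 3 / 2 by apply: sqrtr_le_sqr; lra.
  have : 11 / 5 <= sqrt_weight 1 3 2 by apply: sqrtr_ge_sqr; lra.
  lra.
Qed.

End SqrtWeight.

Lemma path_adj_sym n : symmetric (@path_adj n).
Proof. by move=> i j; rewrite /path_adj orbC. Qed.

Lemma path_adj_irr n : irreflexive (@path_adj n).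
Proof. by move=> i; rewrite /path_adj orbb; apply/negbTE; lia. Qed.

Section Construction.
Variables (T : finType) (g : rel T) (x y : T) (k l : nat).
Hypotheses (g_sym : symmetric g) (g_irr : irreflexive g).
Hypotheses (k_gt0 : (0 < k)%N) (l_gt0 : (0 < l)%N).
Local Notation V := (VU T k l).
Local Notation G1 := (G1adj g x y k l).
Local Notation G2 := (G2adj g x y k l).

Definition u1 : V := inr (inl (Ordinal k_gt0)).
Definition vl : V := inr (inr (Ordinal (etrans (ltn_predL l) l_gt0))).

Lemma G1adj_sym : symmetric G1.
Proof. by move=> [a|[i|j]] [b|[i'|j']] //=; apply: g_sym || apply: path_adj_sym. Qed.

Lemma G1adj_irr : irreflexive G1.
Proof. by move=> [a|[i|j]] /=; rewrite ?g_irr ?path_adj_irr. Qed.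

Lemma G2adj_rotate : G2 =2 rotate G1 u1 (inl x) vl.
Proof.
have is_u1E (a : V) : is_u1 a = (a == u1) by case: a => [t|[i|j]].
have is_vlE (a : V) : is_vl a = (a == vl) by case: a => [t|[i|j]].
by move=> a b; rewrite /G2adj !is_u1E !is_vlE.
Qed.

Lemma deg_G1adj_inl a : (deg g a <= deg G1 (inl a))%N.
Proof.
rewrite /deg -(card_imset _ (@inl_inj T ('I_k + 'I_l)%type)).
by apply/subset_leq_card/subsetP => b /imsetP[t]; rewrite !inE => g_at ->.
Qed.

Lemma deg_G1adj_x : (1 < deg g x)%N -> (2 < deg G1 (inl x))%N.
Proof.
move=> deg_x; have u1_notin : u1 \notin inl @: [set t | g x t] by apply/imsetP => -[].
apply: (@leq_trans #|u1 |: inl @: [set t | g x t]|).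
  by rewrite cardsU1 u1_notin card_imset //; exact: inl_inj.
apply/subset_leq_card/subsetP => b; rewrite !inE => /predU1P[->|/imsetP[t]].
  by rewrite /= eqxx.
by rewrite inE => g_xt ->.
Qed.

Lemma deg_G1adj_u1 : (deg G1 u1 <= 2)%N.
Proof.
rewrite /deg; have [k_gt1|k_le1] := ltnP 1 k.
  apply: (@leq_trans #|[set inl x; inr (inl (Ordinal k_gt1)) : V]|); last first.
    by rewrite cards2; case: (_ != _).
  apply/subset_leq_card/subsetP => -[t|[i|j]]; rewrite !inE //= ?andbT //.
  rewrite /path_adj !(inj_eq inr_inj, inj_eq inl_inj) -val_eqE /=; lia.
apply: (@leq_trans #|[set inl x : V]|); last by rewrite cards1.
apply/subset_leq_card/subsetP => -[t|[i|j]]; rewrite !inE //= ?andbT //.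
rewrite /path_adj /=; have := ltn_ord i; lia.
Qed.

Lemma G1adj_vl_pendant : x != y -> (1 < deg g y)%N ->
  exists2 w : V, (forall b, G1 vl b = (b == w)) & (w != inl x) && (1 < deg G1 w)%N.
Proof.
move=> x_neq_y deg_y; have [l_gt1|l_le1] := ltnP 1 l.
  have lt2 : (l - 2 < l)%N by lia.
  exists (inr (inr (Ordinal lt2))).
    move=> [t|[i|j]] //=; first by rewrite [(_ == 0)%N](_ : _ = false) ?andbF //; lia.
    rewrite /path_adj !(inj_eq inr_inj) -val_eqE /=; have := ltn_ord j; lia.
  rewrite /=; have [l_eq2|l_neq2] := eqVneq l 2.
    apply: (@two_le_deg _ _ _ vl (inl y)) => //=; rewrite /path_adj /= ?eqxx; lia.
  have lt3 : (l - 3 < l)%N by lia.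
  apply: (@two_le_deg _ _ _ vl (inr (inr (Ordinal lt3)))); rewrite /= /path_adj /=.
  - lia.
  - lia.
  - by apply/eqP => -[]; lia.
exists (inl y).
  move=> [t|[i|j]] //=.
    by rewrite (inj_eq inl_inj) [(_ == 0)%N](_ : _ = true) ?andbT //; apply/eqP; lia.
  rewrite /path_adj /= [RHS](_ : _ = false); last by apply/negbTE/eqP.
  have := ltn_ord j; lia.
rewrite /= (inj_eq inl_inj) eq_sym x_neq_y.
exact: leq_trans deg_y (deg_G1adj_inl y).
Qed.

Section Weights.
Variables (R : realDomainType) (F : nat -> nat -> R).
Hypothesis F_rot : rotation_weight F.

Lemma weight_sum_G2adj_lt : x != y -> (1 < deg g x)%N -> (1 < deg g y)%N ->
  weight_sum F G2 < weight_sum F G1.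
Proof.
move=> x_neq_y deg_x deg_y.
have [w vl_pendant /andP[w_neq_x deg_w]] := G1adj_vl_pendant x_neq_y deg_y.
rewrite (eq_weight_sum _ G2adj_rotate).
apply: (weight_sum_rotate_lt G1adj_sym G1adj_irr _ _ _ F_rot vl_pendant w_neq_x) => //.
- by rewrite /= eqxx.
- exact: deg_G1adj_x.
- exact: deg_G1adj_u1.
Qed.

End Weights.

End Construction.

Lemma SO_weight_sum (R : realType) (V : finType) (e : rel V) :
  SO R e = 2^-1 * weight_sum (sqrt_weight 0) e.
Proof.
congr (_ * _); apply: eq_bigr => a _; apply: eq_bigr => b _.
by rewrite /sqrt_weight !subr0.
Qed.

Lemma SOred_weight_sum (R : realType) (V : finType) (e : rel V) :
  SOred R e = 2^-1 * weight_sum (sqrt_weight 1) e.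
Proof. by []. Qed.

Theorem lemma2p4 (R : realType) (T : finType) (g : rel T) (x y : T)
  (k l : nat) :
  simple_graph g -> connected_graph g -> x != y ->
  ((deg g x == 2) || (deg g x == 3))%N ->
  ((deg g y == 2) || (deg g y == 3))%N ->
  (0 < k)%N -> (0 < l)%N ->
  SO R (G2adj g x y k l) < SO R (G1adj g x y k l) /\
  SOred R (G2adj g x y k l) < SOred R (G1adj g x y k l).
Proof.
move=> [g_sym g_irr] _ x_neq_y deg_x deg_y k_gt0 l_gt0.
have deg_gt1 d : ((d == 2) || (d == 3))%N -> (1 < d)%N by case/orP=> /eqP->.
have G2_lt F : rotation_weight F ->
    weight_sum F (G2adj g x y k l) < weight_sum F (G1adj g x y k l).
  by move=> F_rot; apply: weight_sum_G2adj_lt; rewrite ?deg_gt1.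
rewrite !SO_weight_sum !SOred_weight_sum !ltr_pM2l ?invr_gt0 ?ltr0n //.
by split; apply: G2_lt; [exact: sqrt_weight0_rotation | exact: sqrt_weight1_rotation].
Qed.
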